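(* Let $\pi_k$ be a stochastic Markov policy, $\alpha\in(0,1)$, and let $S_0=S^{\pi_k}(\alpha)$ be nonempty with $T^{\pi_k}(s,1)>0$ for all $s\in S_0$. Define $$\epsilon_k(x)=x\cdot\min_{s\in S_0}\frac{\alpha-V^{\pi_k}(s,1)}{T^{\pi_k}(s,1)},\qquad L_k(s,x)=\mathbb{E}^{\pi_k}\Big[\sum_{t=0}^{T^*-1}\big(d(s_t,x_t)+\epsilon_k(x_t)\big)\,\Big|\,(s_0,x_0)=(s,x)\Big].$$ Then $\epsilon_k\ge 0$, $(\mathcal{T}_d^{\pi_k}L_k)(s,x)\le L_k(s,x)$ for all $(s,x)\in\mathcal{S}\times\{0,1\}$, and $L_k(s,1)\le\alpha$ for all $s\in S_0$; i.e. $L_k$ satisfies both the Lyapunov condition and the safety condition with respect to $\pi_k$ and $S_0$.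
   Context: Consider a Markov decision process with finite state set $\mathcal{S}$, finite action set $\mathcal{A}$ and transition probabilities $p(s'\mid s,a)$. A target (unsafe) set $\mathcal{G}\subseteq\mathcal{S}$ and a set of terminal states $\mathcal{S}_{\mathrm{term}}\subseteq\mathcal{S}$ are given, and $\mathcal{S}'=\mathcal{S}\setminus\mathcal{S}_{\mathrm{term}}$. The process is augmented with a variable $x_t\in\{0,1\}$ defined by $x_{t+1}=x_t\mathbf{1}_{\mathcal{G}^c}(s_t)$, so $(s_t,x_t)$ is Markov. A (stochastic Markov) policy $\pi$ gives probabilities $\pi(a\mid s,x)$. Let $T^*$ be the first time $t$ with $s_t\in\mathcal{S}_{\mathrm{term}}$. Standing assumption: there is an integer $m$ such that, for every policy and every initial state, $\mathcal{S}_{\mathrm{term}}$ is reached within $m$ steps with positive probability. The stage cost is $d(s,x)=x\,\mathbf{1}_{\mathcal{G}}(s)$ and $V^\pi(s,x)=\mathbb{E}^\pi\big[\sum_{t=0}^{T^*-1}d(s_t,x_t)\mid (s_0,x_0)=(s,x)\big]$; $P^{\mathrm{reach}}_s(\pi)=V^\pi(s,1)$ is the probability of unsafety. The probabilistic safe set of $\pi$ is $S^\pi(\alpha)=\{s\in\mathcal{S}: V^\pi(s,1)\le\alpha\}$. The (expected first-hitting) time is $T^\pi(s,x)=\mathbb{E}^\pi\big[\sum_{t=0}^{T^*-1}x_t\mid(s_0,x_0)=(s,x)\big]$, the expected number of steps before termination during which $\mathcal{G}$ has not yet been left behind. The Bellman operator $\mathcal{T}_d^\pi$ acts on $V:\mathcal{S}\times\{0,1\}\to\mathbb{R}$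 by $(\mathcal{T}_d^\pi V)(s,x)=d(s,x)+\sum_{a}\pi(a\mid s,x)\sum_{s'}p(s'\mid s,a)\,V(s',x\mathbf{1}_{\mathcal{G}^c}(s))$ for $s\in\mathcal{S}'$, and $(\mathcal{T}_d^\pi V)(s,x)=0$ for $s\in\mathcal{S}_{\mathrm{term}}$. *)

From Stdlib Require Import Bool Reals List ClassicalEpsilon.
Import ListNotations.
Open Scope R_scope.

(* Finite MDP: states St and actions Ac are finite types given by complete,
   duplicate-free enumerations lS, lA.  G = target (unsafe) set,
   term = terminal set S_term, p s a s' = p(s' | s, a). *)
Record MDP := mkMDP {
  St : Type;
  Ac : Type;
  lS : list St;
  lA : list Ac;
  p : St -> Ac -> St -> R;
  G : St -> bool;
  term : St -> bool
}.

Definition sumR {T : Type} (l : list T) (f : T -> R) : R :=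
  fold_right (fun a acc => f a + acc) 0 l.

Definition wf_MDP (M : MDP) : Prop :=
  NoDup (lS M) /\ (forall s, In s (lS M)) /\
  NoDup (lA M) /\ (forall a, In a (lA M)) /\
  (forall s a s', 0 <= p M s a s') /\
  (forall s a, sumR (lS M) (fun s' => p M s a s') = 1).

(* Stochastic Markov policy on the augmented state (s, x), x : bool ~ {0,1}. *)
Definition policy (M : MDP) := St M -> bool -> Ac M -> R.

Definition valid_policy (M : MDP) (pi : policy M) : Prop :=
  (forall s x a, 0 <= pi s x a) /\
  (forall s x, sumR (lA M) (pi s x) = 1).

Definition xnext (M : MDP) (s : St M) (x : bool) : bool := x && negb (G M s).

Fixpoint tuples (M : MDP) (N : nat) : list (list (St M)) :=
  match N with
  | O => [nil]
  | S n => flat_map (fun s => map (cons s) (tuples M n)) (lS M)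
  end.

(* probability, under pi and started at (s,x), that s_1 ... s_N = path *)
Fixpoint pathprob (M : MDP) (pi : policy M) (s : St M) (x : bool)
    (path : list (St M)) : R :=
  match path with
  | nil => 1
  | s' :: rest =>
      sumR (lA M) (fun a => pi s x a * p M s a s') *
      pathprob M pi s' (xnext M s x) rest
  end.

(* augmented trajectory (s_t, x_t), t = 0 .. N-1, of the path s_0 = s, s_1..s_N *)
Fixpoint traj (M : MDP) (s : St M) (x : bool) (path : list (St M))
    : list (St M * bool) :=
  match path with
  | nil => nil
  | s' :: rest => (s, x) :: traj M s' (xnext M s x) rest
  end.

(* sum_{t < min(T*, N)} c(s_t, x_t) along a trajectory of length N *)
Fixpoint tcost (M : MDP) (c : St M -> bool -> R) (tr : list (St M * bool)) : R :=
  match tr with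
  | nil => 0
  | (s, x) :: rest => if term M s then 0 else c s x + tcost M c rest
  end.

(* E^pi [ sum_{t=0}^{min(T*,N)-1} c(s_t,x_t) | (s_0,x_0) = (s,x) ] *)
Definition Etrunc (M : MDP) (pi : policy M) (c : St M -> bool -> R)
    (N : nat) (s : St M) (x : bool) : R :=
  sumR (tuples M N)
    (fun path => pathprob M pi s x path * tcost M c (traj M s x path)).

(* limit of a real sequence (0 if it does not converge) *)
Definition lim_seq (u : nat -> R) : R :=
  match excluded_middle_informative (exists l, Un_cv u l) with
  | left H => proj1_sig (constructive_indefinite_description _ H)
  | right _ => 0
  end.

(* E^pi [ sum_{t=0}^{T*-1} c(s_t,x_t) | (s_0,x_0) = (s,x) ]
   (monotone limit of the truncated expectations) *)
Definition Ecost (M : MDP) (pi : policy M) (c : St M -> bool -> R)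
    (s : St M) (x : bool) : R :=
  lim_seq (fun N => Etrunc M pi c N s x).

Definition dcost (M : MDP) (s : St M) (x : bool) : R :=
  if x && G M s then 1 else 0.

Definition xR (x : bool) : R := if x then 1 else 0.

Definition Vpi (M : MDP) (pi : policy M) : St M -> bool -> R :=
  Ecost M pi (dcost M).

(* expected first-hitting time T^pi(s,x) = E[sum_{t<T*} x_t] *)
Definition Tpi (M : MDP) (pi : policy M) : St M -> bool -> R :=
  Ecost M pi (fun _ x => xR x).

(* Pr^pi( s_t in S_term for some t <= m | (s_0,x_0) = (s,x) ) *)
Definition reach_term_prob (M : MDP) (pi : policy M) (m : nat)
    (s : St M) (x : bool) : R :=
  sumR (tuples M m)
    (fun path => pathprob M pi s x path *
                 (if existsb (term M) (s :: path) then 1 else 0)).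

Definition standing_assumption (M : MDP) : Prop :=
  exists m : nat, forall pi : policy M, valid_policy M pi ->
    forall s x, 0 < reach_term_prob M pi m s x.

Definition Bellman_d (M : MDP) (pi : policy M) (V : St M -> bool -> R)
    (s : St M) (x : bool) : R :=
  if term M s then 0
  else dcost M s x +
       sumR (lA M) (fun a => pi s x a *
         sumR (lS M) (fun s' => p M s a s' * V s' (xnext M s x))).

Definition in_safe_set (M : MDP) (pi : policy M) (alpha : R) (s : St M) : bool :=
  if Rle_dec (Vpi M pi s true) alpha then true else false.

(* minimum of a (nonempty) list of reals; 0 on the empty list *)
Definition list_min (l : list R) : R :=
  match l with
  | nil => 0
  | h :: t => fold_left Rmin t h
  end.

Definition eps_k (M : MDP) (pi : policy M) (alpha : R) (x : bool) : R :=
  xR x * list_min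
    (map (fun s => (alpha - Vpi M pi s true) / Tpi M pi s true)
         (filter (in_safe_set M pi alpha) (lS M))).

Definition L_k (M : MDP) (pi : policy M) (alpha : R) : St M -> bool -> R :=
  Ecost M pi (fun s x => dcost M s x + eps_k M pi alpha x).

(* L_k is the expected total of the stage cost d + eps_k with eps_k(x) = x kappa, so by
   linearity L_k = V + kappa T, where kappa = min_{S0} (alpha - V(s,1)) / T(s,1) >= 0; on S0
   this gives L_k(s,1) <= V(s,1) + (alpha - V(s,1)) = alpha.  Off S_term, L_k satisfies
   the Bellman equation L_k = d + eps_k + E[L_k(next state)], and it vanishes on S_term,
   so T_d L_k = L_k - eps_k <= L_k.
   All expectations are limits of truncated sums that are nondecreasing in the horizon;
   they converge because the standing assumption bounds the probability of surviving
   m + 1 steps by a uniform K < 1, so the expected truncated time is at most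
   (m + 1) / (1 - K). *)

From Stdlib Require Import Bool Reals List Lra Lia ClassicalEpsilon.
Open Scope R_scope.

Lemma sumR_ext {T} (l : list T) (f g : T -> R) : (forall a, f a = g a) -> sumR l f = sumR l g.
Proof. intros H; induction l; simpl; rewrite ?H, ?IHl; reflexivity. Qed.

Lemma sumR_le {T} (l : list T) (f g : T -> R) : (forall a, f a <= g a) -> sumR l f <= sumR l g.
Proof. intros H; induction l; simpl; [lra|]. specialize (H a); lra. Qed.

Lemma sumR_ge0 {T} (l : list T) (f : T -> R) : (forall a, 0 <= f a) -> 0 <= sumR l f.
Proof. intros H; induction l; simpl; [lra|]. specialize (H a); lra. Qed.

Lemma sumR_0 {T} (l : list T) : sumR l (fun _ => 0) = 0.
Proof. induction l; simpl; [|rewrite IHl]; ring. Qed.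

Lemma sumR_add {T} (l : list T) (f g : T -> R) : sumR l (fun a => f a + g a) = sumR l f + sumR l g.
Proof. induction l; simpl; [|rewrite IHl]; ring. Qed.

Lemma sumR_mull {T} (l : list T) (k : R) (f : T -> R) : sumR l (fun a => k * f a) = k * sumR l f.
Proof. induction l; simpl; [|rewrite IHl]; ring. Qed.

Lemma sumR_app {T} (l1 l2 : list T) (f : T -> R) : sumR (l1 ++ l2) f = sumR l1 f + sumR l2 f.
Proof. induction l1; simpl; [|rewrite IHl1]; ring. Qed.

Lemma sumR_map {T U} (h : U -> T) (l : list U) (f : T -> R) :
  sumR (map h l) f = sumR l (fun a => f (h a)).
Proof. induction l; simpl; [|rewrite IHl]; reflexivity. Qed.

Lemma sumR_flat_map {T U} (h : U -> list T) (l : list U) (f : T -> R) :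
  sumR (flat_map h l) f = sumR l (fun a => sumR (h a) f).
Proof. induction l; simpl; [|rewrite sumR_app, IHl]; reflexivity. Qed.

Lemma sumR_swap {T U} (l : list T) (l' : list U) (F : T -> U -> R) :
  sumR l (fun a => sumR l' (F a)) = sumR l' (fun b => sumR l (fun a => F a b)).
Proof.
  induction l; simpl.
  - symmetry; apply sumR_0.
  - rewrite IHl, <- sumR_add; reflexivity.
Qed.

Lemma Un_cv_const (k : R) : Un_cv (fun _ => k) k.
Proof. intros e He; exists O; intros; rewrite R_dist_eq; lra. Qed.

Lemma sumR_cv {T} (l : list T) (F : nat -> T -> R) (lim : T -> R) :
  (forall a, Un_cv (fun N => F N a) (lim a)) ->
  Un_cv (fun N => sumR l (F N)) (sumR l lim).
Proof.
  intros H; induction l; simpl.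
  - apply Un_cv_const.
  - apply CV_plus; auto.
Qed.

Lemma lim_seq_eq (u : nat -> R) (l : R) : Un_cv u l -> lim_seq u = l.
Proof.
  intros Hu; unfold lim_seq.
  destruct excluded_middle_informative as [Hex | Hnex].
  - destruct constructive_indefinite_description as [l' Hl']; simpl.
    exact (UL_sequence u l' l Hl' Hu).
  - exfalso; apply Hnex; exists l; exact Hu.
Qed.

Lemma fold_left_Rmin_le (t : list R) (h : R) :
  fold_left Rmin t h <= h /\ forall y, In y t -> fold_left Rmin t h <= y.
Proof.
  revert h; induction t as [|a t IH]; intros h; simpl; [split; [lra | tauto]|].
  destruct (IH (Rmin h a)) as [Hh Ht]; split.
  - pose proof (Rmin_l h a); lra.
  - intros y [<- | Hy]; [pose proof (Rmin_r h a); lra | auto].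
Qed.

Lemma list_min_le (l : list R) (y : R) : In y l -> list_min l <= y.
Proof.
  destruct l as [|h t]; simpl; [tauto|].
  destruct (fold_left_Rmin_le t h) as [Hh Ht].
  intros [<- | Hy]; [exact Hh | exact (Ht y Hy)].
Qed.

Lemma list_min_ge0 (l : list R) : (forall y, In y l -> 0 <= y) -> 0 <= list_min l.
Proof.
  destruct l as [|h t]; simpl; intros H; [lra|].
  assert (Hh : 0 <= h) by auto.
  assert (Ht : forall y, In y t -> 0 <= y) by auto.
  clear H; revert h Hh; induction t as [|a t IH]; intros h Hh; simpl; [exact Hh|].
  apply IH; [intros; apply Ht; simpl; auto|].
  apply Rmin_glb; [exact Hh | apply Ht; simpl; auto].
Qed.

Section Expectations.

Variable M : MDP.
Hypothesis HM : wf_MDP M.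
Variable pi : policy M.
Hypothesis Hpi : valid_policy M pi.

Definition trans_prob (s : St M) (x : bool) (s' : St M) : R :=
  sumR (lA M) (fun a => pi s x a * p M s a s').

Definition next_expect (f : St M -> bool -> R) (s : St M) (x : bool) : R :=
  sumR (lS M) (fun s' => trans_prob s x s' * f s' (xnext M s x)).

Lemma trans_prob_ge0 s x s' : 0 <= trans_prob s x s'.
Proof.
  destruct HM as (_ & _ & _ & _ & Hp & _); destruct Hpi as [Hpi0 _].
  apply sumR_ge0; intros a; apply Rmult_le_pos; auto.
Qed.

Lemma trans_prob_sum1 s x : sumR (lS M) (trans_prob s x) = 1.
Proof.
  destruct HM as (_ & _ & _ & _ & _ & Hp1); destruct Hpi as [_ Hpi1].
  unfold trans_prob; rewrite sumR_swap.
  rewrite (sumR_ext _ _ (pi s x)); [apply Hpi1|].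
  intros a; rewrite sumR_mull, Hp1; ring.
Qed.

Lemma next_expect_ext f g s x :
  (forall s' x', f s' x' = g s' x') -> next_expect f s x = next_expect g s x.
Proof. intros H; apply sumR_ext; intros s'; rewrite H; reflexivity. Qed.

Lemma next_expect_le f g s x :
  (forall s' x', f s' x' <= g s' x') -> next_expect f s x <= next_expect g s x.
Proof.
  intros H; apply sumR_le; intros s'.
  apply Rmult_le_compat_l; [apply trans_prob_ge0 | apply H].
Qed.

Lemma next_expect_const k s x : next_expect (fun _ _ => k) s x = k.
Proof.
  unfold next_expect; rewrite (sumR_ext _ _ (fun s' => k * trans_prob s x s')).
  - rewrite sumR_mull, trans_prob_sum1; ring.
  - intros; ring.
Qed.

Lemma next_expect_add f g s x :
  next_expect (fun s' x' => f s' x' + g s' x') s x = next_expect f s x + next_expect g s x.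
Proof.
  unfold next_expect; rewrite <- sumR_add; apply sumR_ext; intros; ring.
Qed.

Lemma next_expect_scal f k s x :
  next_expect (fun s' x' => f s' x' * k) s x = next_expect f s x * k.
Proof.
  unfold next_expect; rewrite Rmult_comm, <- sumR_mull; apply sumR_ext; intros; ring.
Qed.

Lemma next_expect_cv (F : nat -> St M -> bool -> R) (f : St M -> bool -> R) s x :
  (forall s' x', Un_cv (fun N => F N s' x') (f s' x')) ->
  Un_cv (fun N => next_expect (F N) s x) (next_expect f s x).
Proof.
  intros H; apply sumR_cv; intros s'.
  apply CV_mult; [apply Un_cv_const | apply H].
Qed.

Lemma Bellman_d_next_expect V s x :
  Bellman_d M pi V s x = if term M s then 0 else dcost M s x + next_expect V s x.
Proof.
  unfold Bellman_d, next_expect, trans_prob; destruct (term M s); [reflexivity|].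
  f_equal.
  rewrite (sumR_ext (lA M) _
    (fun a => sumR (lS M) (fun s' => pi s x a * p M s a s' * V s' (xnext M s x)))).
  - rewrite sumR_swap; apply sumR_ext; intros s'.
    rewrite Rmult_comm, <- sumR_mull; apply sumR_ext; intros; ring.
  - intros a; rewrite <- sumR_mull; apply sumR_ext; intros; ring.
Qed.

Lemma sumR_tuples_S (F : list (St M) -> R) N :
  sumR (tuples M (S N)) F = sumR (lS M) (fun s' => sumR (tuples M N) (fun r => F (s' :: r))).
Proof. simpl tuples; rewrite sumR_flat_map; apply sumR_ext; intros; apply sumR_map. Qed.

Lemma pathprob_sum1 N s x : sumR (tuples M N) (pathprob M pi s x) = 1.
Proof.
  revert s x; induction N as [|N IH]; intros s x; [cbn; ring|].
  rewrite sumR_tuples_S, <- (trans_prob_sum1 s x); apply sumR_ext; intros s'.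
  cbn [pathprob]; rewrite sumR_mull, IH; unfold trans_prob; ring.
Qed.

Lemma Etrunc_0 c s x : Etrunc M pi c 0 s x = 0.
Proof. unfold Etrunc; simpl; ring. Qed.

Lemma Etrunc_S c N s x :
  Etrunc M pi c (S N) s x =
  if term M s then 0 else c s x + next_expect (Etrunc M pi c N) s x.
Proof.
  unfold Etrunc at 1; rewrite sumR_tuples_S; cbn [pathprob traj tcost].
  destruct (term M s).
  - rewrite (sumR_ext _ _ (fun _ => 0)); [apply sumR_0|]; intros s'.
    rewrite (sumR_ext _ _ (fun _ => 0)); [apply sumR_0|]; intros r; ring.
  - rewrite (sumR_ext _ _ (fun s' => c s x * trans_prob s x s' +
                                     trans_prob s x s' * Etrunc M pi c N s' (xnext M s x))).
    + rewrite sumR_add, sumR_mull, trans_prob_sum1; unfold next_expect; ring.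
    + intros s'; unfold Etrunc.
      rewrite (sumR_ext _ _ (fun r => c s x * trans_prob s x s' * pathprob M pi s' (xnext M s x) r +
        trans_prob s x s' * (pathprob M pi s' (xnext M s x) r *
                             tcost M c (traj M s' (xnext M s x) r)))).
      * rewrite sumR_add, !sumR_mull, pathprob_sum1; ring.
      * intros r; unfold trans_prob; ring.
Qed.

Lemma Etrunc_add c1 c2 N s x :
  Etrunc M pi (fun s x => c1 s x + c2 s x) N s x =
  Etrunc M pi c1 N s x + Etrunc M pi c2 N s x.
Proof.
  revert s x; induction N as [|N IH]; intros s x; [rewrite !Etrunc_0; ring|].
  rewrite !Etrunc_S; destruct (term M s); [ring|].
  rewrite (next_expect_ext _ (fun s' x' => Etrunc M pi c1 N s' x' + Etrunc M pi c2 N s' x'))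
    by (intros; apply IH).
  rewrite next_expect_add; ring.
Qed.

Lemma Etrunc_scal c k N s x :
  Etrunc M pi (fun s x => c s x * k) N s x = Etrunc M pi c N s x * k.
Proof.
  revert s x; induction N as [|N IH]; intros s x; [rewrite !Etrunc_0; ring|].
  rewrite !Etrunc_S; destruct (term M s); [ring|].
  rewrite (next_expect_ext _ (fun s' x' => Etrunc M pi c N s' x' * k)) by (intros; apply IH).
  rewrite next_expect_scal; ring.
Qed.

Lemma Etrunc_le c1 c2 N s x :
  (forall s x, c1 s x <= c2 s x) -> Etrunc M pi c1 N s x <= Etrunc M pi c2 N s x.
Proof.
  intros Hc; revert s x; induction N as [|N IH]; intros s x; [rewrite !Etrunc_0; lra|].
  rewrite !Etrunc_S; destruct (term M s); [lra|].
  pose proof (next_expect_le _ _ s x IH); specialize (Hc s x); lra.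
Qed.

Lemma Etrunc_growing c s x :
  (forall s x, 0 <= c s x) -> Un_growing (fun N => Etrunc M pi c N s x).
Proof.
  intros Hc N; revert s x; induction N as [|N IH]; intros s x.
  - rewrite Etrunc_S, Etrunc_0; destruct (term M s); [lra|].
    rewrite (next_expect_ext _ (fun _ _ => 0)) by (intros; apply Etrunc_0).
    rewrite next_expect_const; specialize (Hc s x); lra.
  - rewrite (Etrunc_S c (S N)), (Etrunc_S c N); destruct (term M s); [lra|].
    pose proof (next_expect_le _ _ s x IH); lra.
Qed.

Lemma reach_term_prob_0 s x : reach_term_prob M pi 0 s x = if term M s then 1 else 0.
Proof. unfold reach_term_prob; simpl; destruct (term M s); simpl; ring. Qed.

Lemma reach_term_prob_S m s x :
  reach_term_prob M pi (S m) s x =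
  if term M s then 1 else next_expect (reach_term_prob M pi m) s x.
Proof.
  unfold reach_term_prob at 1; rewrite sumR_tuples_S.
  destruct (term M s) eqn:Hs.
  - rewrite (sumR_ext _ _ (trans_prob s x)); [apply trans_prob_sum1|]; intros s'.
    rewrite (sumR_ext _ _ (fun r => trans_prob s x s' * pathprob M pi s' (xnext M s x) r)).
    + rewrite sumR_mull, pathprob_sum1; ring.
    + intros r; cbn [pathprob existsb]; rewrite Hs; unfold trans_prob; simpl; ring.
  - apply sumR_ext; intros s'; unfold reach_term_prob; rewrite <- sumR_mull.
    apply sumR_ext; intros r; cbn [pathprob]; unfold trans_prob.
    change (existsb (term M) (s :: s' :: r)) with (term M s || existsb (term M) (s' :: r)).
    rewrite Hs; simpl; ring.
Qed.

Fixpoint survival (P : nat) (s : St M) (x : bool) : R :=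
  match P with
  | O => 1
  | S P' => if term M s then 0 else next_expect (survival P') s x
  end.

Lemma survival_reach m s x : survival (S m) s x = 1 - reach_term_prob M pi m s x.
Proof.
  revert s x; induction m as [|m IH]; intros s x.
  - cbn [survival]; rewrite reach_term_prob_0, next_expect_const; destruct (term M s); ring.
  - cbn [survival] in *; rewrite reach_term_prob_S; destruct (term M s); [ring|].
    rewrite (next_expect_ext _ (fun s' x' => 1 + reach_term_prob M pi m s' x' * -1))
      by (intros; rewrite IH; ring).
    rewrite next_expect_add, next_expect_const, next_expect_scal; ring.
Qed.

(* In expectation, min(T*, P + N) <= P + 1{T* >= P} min(T* - P, N). *)
Lemma Etrunc_one_shift P N B :
  (forall s x, Etrunc M pi (fun _ _ => 1) N s x <= B) ->
  forall s x, Etrunc M pi (fun _ _ => 1) (P + N) s x <= INR P + survival P s x * B.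
Proof.
  intros HB; induction P as [|P IH]; intros s x; [simpl; specialize (HB s x); lra|].
  cbn [Nat.add survival]; rewrite Etrunc_S, S_INR.
  destruct (term M s); [pose proof (pos_INR P); lra|].
  pose proof (next_expect_le _ (fun s' x' => INR P + survival P s' x' * B) s x IH) as Hstep.
  rewrite next_expect_add, next_expect_const, next_expect_scal in Hstep; lra.
Qed.

Lemma exists_uniform_bound_lt1 (f : St M -> bool -> R) :
  (forall s x, f s x < 1) -> exists K, K < 1 /\ forall s x, f s x <= K.
Proof.
  intros Hf.
  assert (Hl : forall l, exists K, K < 1 /\ forall s, In s l -> forall x, f s x <= K).
  { induction l as [|a l [K [HK1 HK]]].
    - exists 0; split; [lra | intros s []].
    - exists (Rmax K (Rmax (f a true) (f a false))); split.
      + apply Rmax_lub_lt; [exact HK1 | apply Rmax_lub_lt; apply Hf].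
      + intros s [<- | Hs] x.
        * eapply Rle_trans, Rmax_r; destruct x; [apply Rmax_l | apply Rmax_r].
        * eapply Rle_trans, Rmax_l; apply HK, Hs. }
  destruct HM as (_ & HS & _); destruct (Hl (lS M)) as [K [HK1 HK]].
  exists K; split; [exact HK1 | intros s x; apply HK, HS].
Qed.

Hypothesis Hstand : standing_assumption M.

Lemma Etrunc_one_bounded : exists B, forall N s x, Etrunc M pi (fun _ _ => 1) N s x <= B.
Proof.
  destruct Hstand as [m Hm].
  destruct (exists_uniform_bound_lt1 (survival (S m))) as [K [HK1 HK]].
  { intros s x; rewrite survival_reach; specialize (Hm pi Hpi s x); lra. }
  exists (INR (S m) / (1 - K)); set (B := INR (S m) / (1 - K)).
  assert (HB0 : 0 <= B).
  { apply Rmult_le_pos; [apply pos_INR | left; apply Rinv_0_lt_compat; lra]. }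
  assert (HBfix : INR (S m) + K * B = B) by (unfold B; field; lra).
  assert (Hblock : forall k s x, Etrunc M pi (fun _ _ => 1) (k * S m) s x <= B).
  { induction k as [|k IH]; intros s x; [simpl; rewrite Etrunc_0; exact HB0|].
    pose proof (Etrunc_one_shift (S m) _ B IH s x) as Hshift.
    pose proof (Rmult_le_compat_r B _ _ HB0 (HK s x)) as HsurvB.
    cbn [Nat.mul]; lra. }
  intros N s x; eapply Rle_trans; [|apply (Hblock N)].
  apply (tech9 _ (Etrunc_growing _ s x (fun _ _ => Rle_0_1))); nia.
Qed.

Lemma Etrunc_cv c C :
  (forall s x, 0 <= c s x <= C) ->
  forall s x, Un_cv (fun N => Etrunc M pi c N s x) (Ecost M pi c s x).
Proof.
  intros Hc s x; destruct Etrunc_one_bounded as [B HB].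
  destruct (growing_cv (fun N => Etrunc M pi c N s x)) as [l Hl].
  - apply Etrunc_growing; intros; apply Hc.
  - exists (B * C); intros y [N ->].
    apply Rle_trans with (Etrunc M pi (fun _ _ => 1) N s x * C).
    + rewrite <- Etrunc_scal; apply Etrunc_le; intros s' x'; specialize (Hc s' x'); lra.
    + apply Rmult_le_compat_r; [specialize (Hc s x); lra | apply HB].
  - unfold Ecost; rewrite (lim_seq_eq _ _ Hl); exact Hl.
Qed.

Lemma Ecost_add_scal c1 c2 k C1 C2 :
  (forall s x, 0 <= c1 s x <= C1) -> (forall s x, 0 <= c2 s x <= C2) ->
  forall s x, Ecost M pi (fun s x => c1 s x + c2 s x * k) s x =
              Ecost M pi c1 s x + Ecost M pi c2 s x * k.
Proof.
  intros Hc1 Hc2 s x; unfold Ecost at 1; apply lim_seq_eq.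
  apply (Un_cv_ext (fun N => Etrunc M pi c1 N s x + Etrunc M pi c2 N s x * k)).
  - intros N; rewrite Etrunc_add, Etrunc_scal; reflexivity.
  - apply CV_plus; [|apply CV_mult; [|apply Un_cv_const]];
      [apply (Etrunc_cv _ C1) | apply (Etrunc_cv _ C2)]; assumption.
Qed.

Lemma Ecost_fixpoint c C :
  (forall s x, 0 <= c s x <= C) ->
  forall s x, Ecost M pi c s x =
              if term M s then 0 else c s x + next_expect (Ecost M pi c) s x.
Proof.
  intros Hc s x; unfold Ecost at 1; apply lim_seq_eq, (CV_shift _ 1).
  apply (Un_cv_ext (fun N => if term M s then 0 else
                               c s x + next_expect (Etrunc M pi c N) s x)).
  - intros N; rewrite Nat.add_1_r, Etrunc_S; reflexivity.
  - destruct (term M s); [apply Un_cv_const|].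
    apply CV_plus; [apply Un_cv_const|].
    apply next_expect_cv; intros; apply (Etrunc_cv _ C Hc).
Qed.

End Expectations.

Definition eps_rate (M : MDP) (pi : policy M) (alpha : R) : R :=
  list_min (map (fun s => (alpha - Vpi M pi s true) / Tpi M pi s true)
                (filter (in_safe_set M pi alpha) (lS M))).

Lemma eps_k_rate M pi alpha x : eps_k M pi alpha x = xR x * eps_rate M pi alpha.
Proof. reflexivity. Qed.

Section SafetyMargin.

Variables (M : MDP) (pi : policy M) (alpha : R).
Hypothesis HT : forall s, Vpi M pi s true <= alpha -> 0 < Tpi M pi s true.

Lemma eps_rate_ge0 : 0 <= eps_rate M pi alpha.
Proof.
  apply list_min_ge0; intros y Hy.
  apply in_map_iff in Hy as [s [<- Hs]]; apply filter_In in Hs as [_ Hs].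
  unfold in_safe_set in Hs; destruct Rle_dec as [Hv|]; [|discriminate].
  apply Rmult_le_pos; [lra | left; apply Rinv_0_lt_compat, HT, Hv].
Qed.

Lemma eps_rate_slack s :
  In s (lS M) -> Vpi M pi s true <= alpha ->
  Tpi M pi s true * eps_rate M pi alpha <= alpha - Vpi M pi s true.
Proof.
  intros HsM Hv; pose proof (HT s Hv) as HTs.
  assert (Hmin : eps_rate M pi alpha <= (alpha - Vpi M pi s true) / Tpi M pi s true).
  { apply list_min_le, in_map_iff; exists s; split; [reflexivity|].
    apply filter_In; split; [exact HsM|].
    unfold in_safe_set; destruct Rle_dec; [reflexivity | contradiction]. }
  replace (alpha - Vpi M pi s true)
    with (Tpi M pi s true * ((alpha - Vpi M pi s true) / Tpi M pi s true)) by (field; lra).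
  apply Rmult_le_compat_l; lra.
Qed.

End SafetyMargin.

Theorem mainTheorem2 (M : MDP) (HM : wf_MDP M)
  (Hstand : standing_assumption M)
  (pi : policy M) (Hpi : valid_policy M pi)
  (alpha : R) (Halpha : 0 < alpha < 1)
  (Hne : exists s0 : St M, Vpi M pi s0 true <= alpha)
  (HT : forall s : St M, Vpi M pi s true <= alpha -> 0 < Tpi M pi s true) :
  (forall x : bool, 0 <= eps_k M pi alpha x) /\
  (forall (s : St M) (x : bool),
      Bellman_d M pi (L_k M pi alpha) s x <= L_k M pi alpha s x) /\
  (forall s : St M, Vpi M pi s true <= alpha -> L_k M pi alpha s true <= alpha).
Proof.
  pose proof (eps_rate_ge0 M pi alpha HT) as Hrate.
  assert (Heps : forall x, 0 <= eps_k M pi alpha x).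
  { intros x; rewrite eps_k_rate; apply Rmult_le_pos; [destruct x; simpl|]; lra. }
  assert (Hd : forall s x, 0 <= dcost M s x <= 1).
  { intros s x; unfold dcost; destruct (x && G M s); lra. }
  assert (Hx : forall (s : St M) x, 0 <= xR x <= 1).
  { intros s x; destruct x; simpl; lra. }
  assert (HLc : forall s x, 0 <= dcost M s x + eps_k M pi alpha x <= 1 + eps_rate M pi alpha).
  { intros s x; rewrite eps_k_rate; specialize (Hd s x); specialize (Hx s x); nra. }
  split; [exact Heps | split].
  - intros s x; unfold L_k.
    rewrite Bellman_d_next_expect, (Ecost_fixpoint M HM pi Hpi Hstand _ _ HLc s x).
    destruct (term M s); [lra|]; specialize (Heps x); lra.
  - intros s Hv.
    assert (HL : L_k M pi alpha s true =
                 Vpi M pi s true + Tpi M pi s true * eps_rate M pi alpha)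
      by exact (Ecost_add_scal M HM pi Hpi Hstand _ _ _ 1 1 Hd Hx s true).
    destruct HM as (_ & HS & _).
    pose proof (eps_rate_slack M pi alpha HT s (HS s) Hv); lra.
Qed.
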